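(* Let $G$, $H$, $J$ be rooted graphs. Then for any integers $g,j\ge 0$ and $h\ge 1$, \[ X_{S^{ghj}(G,H,J)}=X_{S^{(g+j)h0}(G,H,J)}+\sum_{i=1}^{j}\Big(X_{P^{g+h+i-1}(G,H)}\,X_{J^{j-i}}-X_{G^{g+i-1}}\,X_{P^{h+j-i}(H,J)}\Big). \]
   Context: All graphs are finite simple graphs. The chromatic symmetric function of a graph $G$ is $X_G=\sum_{\kappa}\prod_{v\in V(G)}x_{\kappa(v)}$, where $\kappa$ ranges over proper colorings $\kappa:V(G)\to\{1,2,\dots\}$. For nonnegative integers $\tau_1,\tau_2,\tau_3$ and rooted graphs $(G_i,u_i)$, $S^{\tau_1\tau_2\tau_3}(G_1,G_2,G_3)$ is obtained by taking a center vertex $c$ and three paths from $c$, disjoint except at $c$, of lengths $\tau_1,\tau_2,\tau_3$, and identifying $u_i$ with the far end $s_i$ of the $i$-th path ($s_i=c$ if $\tau_i=0$), the $G_i$ being disjoint. For rooted graphs $(G,u)$, $(H,v)$ and $k\ge0$, $P^k(G,H)$ is obtained from the disjoint union of $G$ and $H$ by adding a path of length $k$ joining $u$ and $v$ (for $k=0$ identifying them), and $G^k=P^k(G,K_1)$ is $G$ with a pendant path of length $k$ at its root. *)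

From HB Require Import structures.
From mathcomp Require Import all_boot all_order all_algebra.
From mathcomp Require Import mpoly.

Import GRing.Theory.
Local Open Scope ring_scope.

Record rooted_graph := RGraph { vtx : finType; adj : rel vtx; root : vtx }.
Arguments adj : clear implicits.
Arguments root : clear implicits.

Definition simple (G : rooted_graph) : Prop :=
  ssrbool.symmetric (adj G) /\ irreflexive (adj G).

(* Glue B onto A by identifying the vertex a of A with the root of B.
   Vertices: V(A) + (V(B) minus its root). The new root is the root of A. *)
Definition glue_vtx (A : rooted_graph) (B : rooted_graph) : finType :=
  (vtx A + {y : vtx B | y != root B})%type.

Definition glue_adj (A : rooted_graph) (a : vtx A) (B : rooted_graph) : rel (glue_vtx A B) :=
  fun x y =>
    match x, y with
    | inl x', inl y' => adj A x' y'
    | inr x', inr y' => adj B (val x') (val y')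
    | inl x', inr y' => (x' == a) && adj B (root B) (val y')
    | inr x', inl y' => (y' == a) && adj B (val x') (root B)
    end.

Definition glue (A : rooted_graph) (a : vtx A) (B : rooted_graph) : rooted_graph :=
  RGraph (glue_vtx A B) (glue_adj A a B) (inl (root A)).

Definition K2 : rooted_graph := RGraph bool (fun x y => x != y) false.

(* ext G k : G with a pendant path of length k attached at its root,
   re-rooted at the far end of the path (the graph G^k; the root only
   serves for further gluing). *)
Fixpoint ext (G : rooted_graph) (k : nat) : rooted_graph :=
  match k with
  | 0 => G
  | k'.+1 => glue K2 (true : vtx K2) (ext G k')
  end.

Definition Gpow (G : rooted_graph) (k : nat) : rooted_graph := ext G k.

(* P^k(G,H): path of length k joining root G and root H *)
Definition Pk (k : nat) (G H : rooted_graph) : rooted_graph :=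
  glue (ext G k) (root (ext G k)) H.

(* S^{t1 t2 t3}(G1,G2,G3): spider with center c = common far end of the
   three pendant paths *)
Definition Sp (t1 t2 t3 : nat) (G1 G2 G3 : rooted_graph) : rooted_graph :=
  let A := glue (ext G1 t1) (root (ext G1 t1)) (ext G2 t2) in
  glue A (root A) (ext G3 t3).

Definition proper (G : rooted_graph) (N : nat) (f : {ffun vtx G -> 'I_N}) : bool :=
  [forall x, forall y, adj G x y ==> (f x != f y)].

(* The chromatic symmetric function X_G truncated to the variables
   x_1..x_N (colours 'I_N), as a polynomial in {mpoly int[N]}. *)
Definition chromsym (N : nat) (G : rooted_graph) : {mpoly int[N]} :=
  \sum_(f : {ffun vtx G -> 'I_N} | proper G N f) \prod_(v : vtx G) 'X_(f v).

(** Split a colouring of a graph at its root: [X_G = sum_a x_a R_G(a)], where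
    [R_G(a)] sums the monomials of the non-root vertices over the proper
    colourings giving the root colour [a].  Identifying roots multiplies these
    rooted functions pointwise, and a pendant edge acts on them by the linear
    operator [(T u)(a) = sum_(b != a) x_b u(b)], which is self-adjoint for the
    pairing [<u, v> = sum_a x_a u(a) v(a)].  Every graph in the statement thus
    becomes such a pairing, and one application of the cubic identity
    [<p s, T r> - <T p, s r> = <p, s><1, r> - <p, 1><s, r>] moves one edge of
    the third leg of the spider onto the first; the proposition telescopes
    these moves. *)

From Pilot Require Import Defs.
From HB Require Import structures.
From mathcomp Require Import all_boot all_order all_algebra.
From mathcomp Require Import mpoly.
From mathcomp Require Import ring zify.
Import GRing.Theory.
Local Open Scope ring_scope.

Notation root := Defs.root.
Notation proper := Defs.proper.

Section RootedChromatic.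
Variable N : nat.
Notation poly := {mpoly int[N]}.

Lemma properP (G : rooted_graph) (f : {ffun vtx G -> 'I_N}) :
  reflect (forall x y, adj G x y -> f x != f y) (proper G N f).
Proof.
apply: (iffP forallP) => [fP x y xy | fP x].
  by move/forallP/(_ y)/implyP: (fP x); apply.
by apply/forallP => y; apply/implyP/fP.
Qed.

Definition rootchrom (K : rooted_graph) (a : 'I_N) : poly :=
  \sum_(f : {ffun vtx K -> 'I_N} | proper K N f && (f (root K) == a))
     \prod_(v | v != root K) 'X_(f v).

Definition xsum (u : 'I_N -> poly) : poly := \sum_a 'X_a * u a.

Definition pendant (u : 'I_N -> poly) (a : 'I_N) : poly :=
  \sum_(b | b != a) 'X_b * u b.

Lemma chromsym_rootchrom K : chromsym N K = xsum (rootchrom K).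
Proof.
rewrite /chromsym (partition_big (fun f : {ffun vtx K -> 'I_N} => f (root K)) predT) //=.
apply: eq_bigr => a _; rewrite /rootchrom mulr_sumr.
by apply: eq_bigr => f /andP[_ /eqP <-]; rewrite (bigD1 (root K)).
Qed.

Section Glue.
Variables (A : rooted_graph) (a : vtx A) (B : rooted_graph).
Hypothesis irrB : ~~ adj B (root B) (root B).
Notation colA := {ffun vtx A -> 'I_N}.
Notation colB := {ffun vtx B -> 'I_N}.
Notation colAB := {ffun vtx (glue A a B) -> 'I_N}.

Definition glue_col (p : colA * colB) : colAB :=
  [ffun z => match z with inl x => p.1 x | inr y => p.2 (val y) end].

Definition split_col (f : colAB) : colA * colB :=
  ([ffun x => f (inl x)],
   [ffun y => if insub y is Some y' then f (inr y') else f (inl a)]).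

Lemma split_colK : cancel split_col glue_col.
Proof. by move=> f; apply/ffunP => -[x|y]; rewrite !ffunE //= valK. Qed.

Lemma split_glue_col_eq p : (split_col (glue_col p) == p) = (p.2 (root B) == p.1 a).
Proof.
case: p => fA fB; rewrite /split_col xpair_eqE /=.
have -> : [ffun x => glue_col (fA, fB) (inl x)] == fA.
  by apply/eqP/ffunP => x; rewrite !ffunE.
apply/eqP/eqP => [/ffunP/(_ (root B))|fBr].
  by rewrite ffunE insubF ?eqxx // ffunE.
apply/ffunP => y; rewrite ffunE; case: insubP => [y' _ <-|]; first by rewrite ffunE.
by rewrite negbK => /eqP ->; rewrite ffunE.
Qed.

Lemma proper_glue_col (fA : colA) (fB : colB) : fB (root B) = fA a ->
  proper (glue A a B) N (glue_col (fA, fB)) = proper A N fA && proper B N fB.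
Proof.
move=> fBr; apply/properP/andP => [fP|[/properP fAP /properP fBP]].
  split; apply/properP => x y.
    by move/(fP (inl x) (inl y)); rewrite !ffunE.
  have [-> | nx] := eqVneq x (root B); have [-> | ny] := eqVneq y (root B).
  - by rewrite (negbTE irrB).
  - by move=> xy; have := fP (inl a) (inr (exist _ y ny)); rewrite !ffunE /= eqxx fBr; apply.
  - by move=> xy; have := fP (inr (exist _ x nx)) (inl a); rewrite !ffunE /= eqxx fBr; apply.
  - by move/(fP (inr (exist _ x nx)) (inr (exist _ y ny))); rewrite !ffunE.
move=> [x|[x nx]] [y|[y ny]]; rewrite !ffunE //=; [exact: fAP| | |exact: fBP].
  by case/andP => /eqP -> xy; rewrite -fBr; apply: fBP.
by case/andP => /eqP -> xy; rewrite -fBr; apply: fBP.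
Qed.

Lemma prod_glue_col p :
  \prod_(v | v != root (glue A a B)) 'X_(glue_col p v) =
  (\prod_(x | x != root A) 'X_(p.1 x)) * \prod_(y | y != root B) 'X_(p.2 y) :> poly.
Proof.
rewrite big_sumType /=; congr (_ * _); first by apply: eq_bigr => x _; rewrite ffunE.
by rewrite (big_sub (predC1 (root B))); apply: eq_bigr => y _; rewrite ffunE.
Qed.

Lemma rootchrom_glue c :
  rootchrom (glue A a B) c = \sum_(fA : colA | proper A N fA && (fA (root A) == c))
     (\prod_(x | x != root A) 'X_(fA x)) * rootchrom B (fA a).
Proof.
rewrite /rootchrom (reindex_onto glue_col split_col) /=; last by move=> f; rewrite split_colK.
under [RHS]eq_bigr do rewrite mulr_sumr.
rewrite pair_big_dep /=; apply: eq_big => [[fA fB]|p _]; last by rewrite prod_glue_col.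
rewrite split_glue_col_eq /=; have [fBr|] := eqVneq (fB (root B)) (fA a); last by rewrite !andbF.
by rewrite proper_glue_col // ffunE /= !andbT andbAC.
Qed.
End Glue.

Lemma rootchrom_glue_root A B c : ~~ adj B (root B) (root B) ->
  rootchrom (glue A (root A) B) c = rootchrom A c * rootchrom B c.
Proof.
move=> irrB; rewrite rootchrom_glue // /rootchrom mulr_suml.
by apply: eq_bigr => f /andP[_ /eqP ->].
Qed.

Lemma sum_ffun_bool (F : {ffun bool -> 'I_N} -> poly) :
  \sum_f F f = \sum_a \sum_b F [ffun x : bool => if x then b else a].
Proof.
rewrite pair_big /=.
rewrite (reindex (fun q : 'I_N * 'I_N => [ffun x : bool => if x then q.2 else q.1])) //=.
exists (fun f => (f false, f true)) => [[c b]|f] _; rewrite ?ffunE //.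
by apply/ffunP => -[]; rewrite ffunE.
Qed.

Lemma properK2 (f : {ffun bool -> 'I_N}) : proper K2 N f = (f false != f true).
Proof.
apply/properP/idP => [/(_ false true)|ne [] [] //= _]; first exact.
by rewrite eq_sym.
Qed.

Lemma rootchrom_pendant B : ~~ adj B (root B) (root B) ->
  rootchrom (glue K2 true B) =1 pendant (rootchrom B).
Proof.
move=> irrB c; rewrite rootchrom_glue // big_mkcond sum_ffun_bool /=.
rewrite (bigD1 c) //= [X in _ + X]big1 ?addr0 => [|a ac]; last first.
  by apply: big1 => b _; rewrite properK2 !ffunE (negbTE ac) andbF.
rewrite /pendant [RHS]big_mkcond; apply: eq_bigr => b _.
by rewrite properK2 !ffunE eq_sym eqxx andbT big_mkcond big_bool /= ffunE mulr1; case: (b != c).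
Qed.

Lemma root_irr_ext K k : ~~ adj K (root K) (root K) ->
  ~~ adj (ext K k) (root (ext K k)) (root (ext K k)).
Proof. by case: k. Qed.

Lemma rootchrom_ext K k : ~~ adj K (root K) (root K) ->
  rootchrom (ext K k) =1 iter k pendant (rootchrom K).
Proof.
move=> irrK; elim: k => // k IH c /=.
by rewrite rootchrom_pendant ?root_irr_ext //; apply: eq_bigr => b _; rewrite IH.
Qed.

Lemma pendantE u c : pendant u c = xsum u - 'X_c * u c.
Proof. by rewrite /xsum (bigD1 c) //= [X in _ = X - _]addrC addrK. Qed.

Lemma xsum_mul_pendant u v :
  xsum (fun c => u c * pendant v c) =
  xsum u * xsum v - \sum_c 'X_c ^+ 2 * (u c * v c).
Proof.
rewrite /xsum mulr_suml -sumrB; apply: eq_bigr => c _.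
by rewrite pendantE /xsum; ring.
Qed.

Lemma xsum_pendant_sym u v :
  xsum (fun c => pendant u c * v c) = xsum (fun c => u c * pendant v c).
Proof.
have -> : xsum (fun c => pendant u c * v c) = xsum (fun c => v c * pendant u c).
  by apply: eq_bigr => c _; rewrite [pendant u c * _]mulrC.
rewrite !xsum_mul_pendant [xsum v * _]mulrC; congr (_ - _).
by apply: eq_bigr => c _; rewrite [v c * _]mulrC.
Qed.

Lemma xsum_iter_pendant_sym k u v :
  xsum (fun c => iter k pendant u c * v c) = xsum (fun c => u c * iter k pendant v c).
Proof. by elim: k v => // k IH v; rewrite /= xsum_pendant_sym IH -iterSr. Qed.

Lemma xsum_pendant_exchange p s r :
  xsum (fun c => p c * s c * pendant r c) - xsum (fun c => pendant p c * s c * r c) =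
  xsum (fun c => p c * s c) * xsum r - xsum p * xsum (fun c => s c * r c).
Proof.
have -> : xsum (fun c => pendant p c * s c * r c) =
          xsum (fun c => (s c * r c) * pendant p c).
  by apply: eq_bigr => c _; ring.
rewrite !xsum_mul_pendant.
have -> : \sum_c 'X_c ^+ 2 * (s c * r c * p c) = \sum_c 'X_c ^+ 2 * (p c * s c * r c).
  by apply: eq_bigr => c _; ring.
ring.
Qed.

Lemma chromsym_Gpow K k : ~~ adj K (root K) (root K) ->
  chromsym N (Gpow K k) = xsum (iter k pendant (rootchrom K)).
Proof.
by move=> irrK; rewrite chromsym_rootchrom; apply: eq_bigr => c _; rewrite rootchrom_ext.
Qed.

Lemma chromsym_Pk k G H :
  ~~ adj G (root G) (root G) -> ~~ adj H (root H) (root H) ->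
  chromsym N (Pk k G H) = xsum (fun c => iter k pendant (rootchrom G) c * rootchrom H c).
Proof.
move=> irrG irrH; rewrite chromsym_rootchrom; apply: eq_bigr => c _.
by rewrite /Pk rootchrom_glue_root // rootchrom_ext.
Qed.

Section Spider.
Variables G H J : rooted_graph.
Hypotheses (irrG : ~~ adj G (root G) (root G)) (irrH : ~~ adj H (root H) (root H))
           (irrJ : ~~ adj J (root J) (root J)).

Lemma chromsym_Sp t1 t2 t3 :
  chromsym N (Sp t1 t2 t3 G H J) = xsum (fun c =>
    iter t1 pendant (rootchrom G) c * iter t2 pendant (rootchrom H) c *
    iter t3 pendant (rootchrom J) c).
Proof.
rewrite chromsym_rootchrom; apply: eq_bigr => c _.
by rewrite /Sp /= !rootchrom_glue_root ?root_irr_ext // !rootchrom_ext.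
Qed.

Lemma chromsym_Sp_shift t1 t2 t3 :
  chromsym N (Sp t1 t2 t3.+1 G H J) - chromsym N (Sp t1.+1 t2 t3 G H J) =
  chromsym N (Pk (t1 + t2) G H) * chromsym N (Gpow J t3)
  - chromsym N (Gpow G t1) * chromsym N (Pk (t2 + t3) H J).
Proof.
rewrite !chromsym_Sp !chromsym_Pk // !chromsym_Gpow //.
rewrite [(t1 + t2)%N]addnC [(t2 + t3)%N]addnC !iterD.
rewrite (xsum_iter_pendant_sym t2) (xsum_iter_pendant_sym t3).
exact: xsum_pendant_exchange.
Qed.
End Spider.
End RootedChromatic.

Theorem proposition4p2 (G H J : rooted_graph) (g h j : nat) :
  simple G -> simple H -> simple J -> (1 <= h)%N ->
  forall N : nat,
    chromsym N (Sp g h j G H J) =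
    chromsym N (Sp (g + j) h 0 G H J) +
    \sum_(1 <= i < j.+1)
      (chromsym N (Pk (g + h + i - 1) G H) * chromsym N (Gpow J (j - i))
       - chromsym N (Gpow G (g + i - 1)) * chromsym N (Pk (h + j - i) H J)).
Proof.
move=> [_ irrG] [_ irrH] [_ irrJ] _ N.
set S := fun i => chromsym N (Sp (g + i) h (j - i) G H J).
rewrite big_add1 (telescope_sumr_eq (fun i => - S i)) // => [|i /andP[_ ij]].
  by rewrite /S addn0 subn0 subnn opprK addNKr.
rewrite /S opprK [RHS]addrC [(g + i.+1)%N]addnS.
have -> : (j - i = (j - i.+1).+1)%N by lia.
rewrite chromsym_Sp_shift ?irrG ?irrH ?irrJ //.
by congr (chromsym N (Pk _ G H) * _ - chromsym N (Gpow G _) * chromsym N (Pk _ H J)); lia.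
Qed.
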